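(* Let $p \geq 5$ and $g \geq 2$ be integers such that $F = \frac{8(g-1)}{p-4}$ is a positive integer divisible by $4$. Then the closed orientable surface $S_g$ of genus $g$ admits a tiling $Y$ by $F$ copies of a regular right-angled hyperbolic $p$-gon whose closed geodesics $h_1, \ldots, h_n$ can be oriented so that $\sum_i [h_i] = 0$ in $H_1(S_g;\mathbb{Z})$.
   Context: In such a tiling four tiles meet at each vertex. The edges of $Y$ are partitioned into closed geodesics: closed curves made of edges of $Y$ passing straight through each vertex they meet, two geodesics (possibly the same) crossing at right angles at each vertex. *)

(* Combinatorial model of a tiling of a closed orientable
   surface by right-angled regular p-gons, via an oriented combinatorial map
   (rotation system) on a finite set of darts (half-edges). *)
From mathcomp Require Import all_boot all_fingroup all_algebra.
Set Implicit Arguments. Unset Strict Implicit. Unset Printing Implicit Defensive.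

Section Maps.
Variable D : finType.

(* s : rotation of darts around their vertex; a : edge involution.
   A dart d is viewed as the edge oriented away from its vertex. *)

(* face permutation: d |-> s (a d) : the next dart along the boundary of the
   face that traverses d positively.  (perm product is left-to-right.) *)
Definition face_perm (s a : {perm D}) : {perm D} := (a * s)%g.

Definition num_vertices (s : {perm D}) : nat := fcard s D.
Definition num_edges (a : {perm D}) : nat := fcard a D.
Definition num_faces (s a : {perm D}) : nat := fcard (face_perm s a) D.

Definition map_connected (s a : {perm D}) : Prop :=
  forall x y : D, connect (fun u v => (v == s u) || (v == a u)) x y.

(* A tiling of the closed orientable surface of genus g by F regular
   right-angled p-gons: every vertex has degree 4 (four right angles),
   every face is a p-gon, there are F faces, and the Euler characteristic
   V - E + F equals 2 - 2g. *)
Definition rr_tiling (s a : {perm D}) (p g F : nat) : Prop :=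
  (forall d, a (a d) = d) /\
  (forall d, a d != d) /\
  map_connected s a /\
  (forall d, fingraph.order s d = 4) /\
  (forall d, fingraph.order (face_perm s a) d = p) /\
  num_faces s a = F /\
  num_vertices s + num_faces s a + 2 * g = num_edges a + 2.

(* Straight continuation through a degree-4 vertex: the geodesic entering the
   head of d leaves along the opposite dart s (s (a d)).  An orientation of
   all closed geodesics = a choice O of exactly one dart per edge, closed
   under this straight continuation. *)
Definition geodesic_orientation (s a : {perm D}) (O : {set D}) : Prop :=
  (forall d, (d \in O) != (a d \in O)) /\
  (forall d, d \in O -> s (s (a d)) \in O).

(* The integral 1-chain  sum_i [h_i] : value +1 on darts in O, -1 on the
   reversed darts. *)
Definition geodesic_chain (O : {set D}) (d : D) : int :=
  if d \in O then 1%R else (-1)%R.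

(* A (cellular) 1-chain is null-homologous iff it is the boundary of an
   integral 2-chain c (c constant on faces = face-permutation orbits);
   boundary of c evaluated on dart d = c(face left of d) - c(face left of a d). *)
Definition null_homologous (s a : {perm D}) (z : D -> int) : Prop :=
  exists c : D -> int,
    (forall d, c (face_perm s a d) = c d) /\
    (forall d, z d = (c d - c (a d))%R).

End Maps.

From mathcomp Require Import all_boot all_fingroup all_algebra.
From mathcomp Require Import zify.
Set Implicit Arguments. Unset Strict Implicit. Unset Printing Implicit Defensive.
Import GRing.Theory Num.Theory.

(* The tiling is built from 2|H| copies of the p-gon with sides indexed by
   Z/p: "black" tiles (false, h) and "white" tiles (true, h), side i of the
   black tile h being glued to side -i of the white tile M_i h.  Every vertex
   then has degree 4 as soon as crossing two consecutive black sides at a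
   vertex acts on H by a fixed-point-free involution N_i.
   The geodesics can be oriented with zero sum whenever the tiles carry a
   height function c: adjacent tiles differ by 1 and the two pairs of opposite
   tiles at each vertex have equal sums.  Orienting each edge with its higher tile on the
   left, a geodesic then continues straight through every vertex, and the sum
   of the oriented geodesics is the boundary of the 2-chain c.
   For p even, H is the dihedral group of order F/2 with heights 1 on white
   tiles and 0 or 2 on black tiles; for p odd an extra Z/2 factor, switched
   across the last side, is needed to make the heights consistent. *)

Definition null_geodesic_tiling (p g F : nat) : Prop :=
  exists (D : finType) (s a : {perm D}) (O : {set D}),
    [/\ rr_tiling s a p g F, geodesic_orientation s a O
      & null_homologous s a (geodesic_chain O)].

Lemma order_eq_iter (T : finType) (f : T -> T) (x : T) (n : nat) :
  injective f -> iter n.+1 f x = x -> (forall k, 0 < k <= n -> iter k f x != x) ->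
  fingraph.order f x = n.+1.
Proof.
move=> finj periodic aperiodic; apply/eqP; rewrite eqn_leq; apply/andP; split.
  have cyc : fcycle f (traject f x n.+1).
    by rewrite trajectS /= rcons_path fpath_traject /= last_traject -iterS periodic.
  have := order_le_cycle cyc (_ : x \in traject f x n.+1).
  by rewrite size_traject; apply; rewrite trajectS mem_head.
rewrite leqNgt; apply/negP => lt_order.
have := aperiodic (fingraph.order f x).
by rewrite fingraph.order_gt0 -ltnS lt_order fingraph.iter_order // eqxx => /(_ isT).
Qed.

Lemma fcard_uniform_order (T : finType) (f : T -> T) (n : nat) :
  injective f -> (forall x, fingraph.order f x = n) -> fcard f T * n = #|T|.
Proof.
by move=> finj orderf; apply: fcard_order_set => //; apply/subsetP => x _; rewrite inE orderf.
Qed.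

Lemma connect_from_base (T : finType) (e : rel T) (x0 : T) :
  connect_sym e -> (forall x, connect e x0 x) -> forall x y, connect e x y.
Proof. by move=> esym reach x y; apply: connect_trans (reach y); rewrite esym. Qed.

Section CyclicIndex.
Local Open Scope ring_scope.
Variable m : nat.

Lemma val_subZp1 (i : 'I_m.+1) : (0 < m)%N ->
  nat_of_ord (i - Zp1) = (if i == 0%N :> nat then m else i.-1)%N.
Proof.
move=> m_gt0; rewrite /= (modn_small (_ : 1 < m.+1)%N) // subn1 /= (modn_small (ltnSn m)).
move: (ltn_ord i) => lt_i; case: ifP => /eqP i0.
  by rewrite i0 add0n modn_small.
by rewrite (_ : (i + m = i.-1 + m.+1)%N) ?modnDr ?modn_small; lia.
Qed.

Lemma Zp1_mulrn_eq0 (k : nat) : (0 < m)%N -> (Zp1 *+ k == 0 :> 'I_m.+1) = (m.+1 %| k)%N.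
Proof. by move=> m_gt0; rewrite -val_eqE /= Zp_mulrn /= (modn_small (_ : 1 < m.+1)%N) // mul1n. Qed.

Lemma Zp1_mulrn_val (z : 'I_m.+1) : Zp1 *+ z = z.
Proof. by rewrite Zp_mulrn -Zp_expg Zp1_expgz. Qed.

End CyclicIndex.

Section HeightFunction.
Local Open Scope ring_scope.
Variables (D : finType) (s a : {perm D}) (c : D -> int).

Definition height_orientation : {set D} := [set d | c d - c (a d) == 1].

Hypothesis aK : involutive a.
Hypothesis c_face : forall d, c (face_perm s a d) = c d.
Hypothesis c_edge : forall d, `|c d - c (a d)| = 1.
Hypothesis c_vertex : forall d, c d + c (s (s d)) = c (s d) + c (s (s (s d))).

Lemma height_vertex_edge d : c (s d) = c (a d).
Proof. by have := c_face (a d); rewrite /face_perm permM aK. Qed.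

Lemma height_edge_cases d : c d - c (a d) = 1 \/ c d - c (a d) = -1.
Proof. by have /eqP := c_edge d; rewrite eqr_norml => /andP[/orP[]/eqP]; [left|right]. Qed.

Lemma height_geodesic_orientation : geodesic_orientation s a height_orientation.
Proof.
split=> d; rewrite !inE.
  by rewrite aK -[c (a d) - c d]opprB; case: (height_edge_cases d) => ->.
move=> /eqP up; apply/eqP.
have := c_vertex (a d).
rewrite [c (s (a d))]height_vertex_edge aK -(height_vertex_edge (s (s (a d)))).
lia.
Qed.

Lemma height_null_homologous : null_homologous s a (geodesic_chain height_orientation).
Proof.
exists c; split=> // d; rewrite /geodesic_chain inE.
by case: (height_edge_cases d) => ->.
Qed.

End HeightFunction.

Section PolygonGluing.
Local Open Scope ring_scope.
Variables (H : finType) (m : nat).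
Local Notation I := 'I_m.+1.
Local Notation dart := (bool * H * I)%type.
Variables (M : I -> {perm H}) (N : I -> H -> H).

Definition glue (x : dart) : dart :=
  let: (white, h, i) := x in
  if white then (false, (M (- i))^-1%g h, - i) else (true, M i h, - i).

Lemma glueK : involutive glue.
Proof. by case=> [[[|] h] i]; rewrite /= opprK ?permK ?permKV. Qed.

Definition turn (x : dart) : dart := let: (t, h, i) := x in (t, h, i + Zp1).
Definition unturn (x : dart) : dart := let: (t, h, i) := x in (t, h, i - Zp1).

Lemma turnK : cancel turn unturn.
Proof. by case=> [[t h] i] /=; rewrite addrK. Qed.

Definition edge_perm : {perm dart} := perm (can_inj glueK).
Definition side_perm : {perm dart} := perm (can_inj turnK).
Definition vertex_perm : {perm dart} := (edge_perm * side_perm)%g.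

Lemma edge_permE x : edge_perm x = glue x. Proof. exact: permE. Qed.
Lemma side_permE x : side_perm x = turn x. Proof. exact: permE. Qed.
Lemma vertex_permE x : vertex_perm x = turn (glue x).
Proof. by rewrite permM !permE. Qed.

Lemma edge_permK : involutive edge_perm.
Proof. by move=> x; rewrite !edge_permE glueK. Qed.

Lemma face_perm_gluing : face_perm vertex_perm edge_perm = side_perm.
Proof. by apply/permP => x; rewrite /face_perm permM vertex_permE edge_permE glueK side_permE. Qed.

Lemma card_darts : #|{: dart}| = (2 * #|H| * m.+1)%N.
Proof. by rewrite !card_prod card_bool card_ord. Qed.

Lemma iter_side_perm k t h i : iter k side_perm (t, h, i) = (t, h, i + Zp1 *+ k).
Proof. by elim: k => [|k IH] /=; rewrite ?addr0 // IH side_permE /= mulrSr addrA. Qed.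

Lemma order_side_perm x : (0 < m)%N -> fingraph.order side_perm x = m.+1.
Proof.
case: x => [[t h] i] m_gt0; apply: order_eq_iter; first exact: perm_inj.
  rewrite iter_side_perm (_ : Zp1 *+ m.+1 = 0) ?addr0 //.
  by apply/eqP; rewrite Zp1_mulrn_eq0.
move=> k /andP[k_gt0 k_le_m]; rewrite iter_side_perm; apply/eqP => -[].
move/eqP; rewrite -{2}[i]addr0 (inj_eq (addrI i)) Zp1_mulrn_eq0 //.
by move/(dvdn_leq k_gt0); rewrite leqNgt ltnS k_le_m.
Qed.

Lemma order_edge_perm x : fingraph.order edge_perm x = 2%N.
Proof.
apply: order_eq_iter; first exact: perm_inj.
  by rewrite /= edge_permK.
by case=> [|[|k]] //= _; rewrite edge_permE; case: x => [[[|] h] i].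
Qed.

Hypothesis MN : forall i h, M (i - Zp1) (N i h) = M i h.
Hypothesis NK : forall i, involutive (N i).
Hypothesis N_fixfree : forall i h, N i h != h.

Lemma vertex_perm2 h i : vertex_perm (vertex_perm (false, h, i)) = (false, N i h, i).
Proof. by rewrite !vertex_permE /= opprD opprK subrK -MN permK. Qed.

Lemma dart_cases x : exists h i, x = (false, h, i) \/ x = vertex_perm (false, h, i).
Proof.
case: x => [[[|] g] j]; last by exists g, j; left.
exists ((M (- (j - Zp1)))^-1%g g), (- (j - Zp1)); right.
by rewrite vertex_permE /= permKV opprK subrK.
Qed.

Lemma order_vertex_perm x : fingraph.order vertex_perm x = 4%N.
Proof.
have vinj := @perm_inj _ vertex_perm.
have period h i : iter 4 vertex_perm (false, h, i) = (false, h, i).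
  by rewrite /= !vertex_perm2 NK.
have aperiodic h i k : (0 < k <= 3)%N -> iter k vertex_perm (false, h, i) != (false, h, i).
  case: k => [|[|[|[|k]]]] //= _; rewrite ?vertex_perm2 ?vertex_permE //.
  by apply/eqP => -[N_fixed]; move: (N_fixfree i h); rewrite N_fixed eqxx.
have [h [i [->|->]]] := dart_cases x.
  exact: order_eq_iter (period h i) (aperiodic h i).
apply: order_eq_iter => [//||k /(aperiodic h i)].
  by rewrite -iterSr iterS period.
by rewrite -iterSr iterS (inj_eq vinj).
Qed.

Definition N_step : rel H := fun x y => [exists i, y == N i x].

Lemma N_step_sym : connect_sym N_step.
Proof.
apply: sym_connect_sym => x y.
by apply/existsP/existsP => -[i /eqP ->]; exists i; rewrite NK.
Qed.

Hypothesis N_connected : forall h h', connect N_step h h'.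

Local Notation step := (fun u v : dart => (v == vertex_perm u) || (v == edge_perm u)).

Lemma connect_step_vertex x : connect step x (vertex_perm x).
Proof. by apply: connect1; rewrite eqxx. Qed.

Lemma connect_step_edge x : connect step x (edge_perm x).
Proof. by apply: connect1; rewrite eqxx orbT. Qed.

Lemma connect_step_side x : connect step x (side_perm x).
Proof.
have -> : side_perm x = vertex_perm (edge_perm x).
  by rewrite vertex_permE edge_permE glueK side_permE.
exact: connect_trans (connect_step_edge x) (connect_step_vertex _).
Qed.

Lemma connect_step_tile t h i j : connect step (t, h, i) (t, h, j).
Proof.
have -> : (t, h, j) = iter (val (j - i)) side_perm (t, h, i).
  by rewrite iter_side_perm Zp1_mulrn_val addrC subrK.
apply: (connect_sub _ (fconnect_iter _ _ _)) => u _ /eqP <-.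
exact: connect_step_side.
Qed.

Lemma connect_step_black h h' i i' : connect step (false, h, i) (false, h', i').
Proof.
have /connectP [hs Npath ->] := N_connected h h'.
elim: hs h Npath i => [|y hs IH] h /=; first by move=> _ i; apply: connect_step_tile.
case/andP => /existsP [k /eqP ->] Npath i.
apply: connect_trans (connect_step_tile _ _ i k) _.
apply: connect_trans (_ : connect step _ (false, N k h, k)) (IH _ Npath k).
by rewrite -vertex_perm2; apply: connect_trans (connect_step_vertex _) (connect_step_vertex _).
Qed.

Lemma gluing_connected : map_connected vertex_perm edge_perm.
Proof.
have black u : exists h i, connect step u (false, h, i) /\ connect step (false, h, i) u.
  case: u => [[[|] g] j]; last by exists g, j.
  case E : (edge_perm (true, g, j)) => [[[|] h] i]; first by rewrite edge_permE in E.
  exists h, i; rewrite -E; split; first exact: connect_step_edge.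
  by rewrite -{2}(edge_permK (true, g, j)); apply: connect_step_edge.
move=> x y; have [h [i [to_black _]]] := black x; have [h' [i' [_ from_black]]] := black y.
exact: connect_trans to_black (connect_trans (connect_step_black h h' i i') from_black).
Qed.

Lemma gluing_rr_tiling g : (3 <= m)%N -> (1 <= g)%N ->
  (2 * #|H| * (m.+1 - 4) = 8 * (g - 1))%N ->
  rr_tiling vertex_perm edge_perm m.+1 g (2 * #|H|).
Proof.
move=> m_ge3 g_ge1 euler; have m_gt0 : (0 < m)%N by lia.
have nV := fcard_uniform_order (@perm_inj _ _) order_vertex_perm.
have nE := fcard_uniform_order (@perm_inj _ _) order_edge_perm.
have nF := fcard_uniform_order (@perm_inj _ _) (order_side_perm ^~ m_gt0).
have faces : num_faces vertex_perm edge_perm = (2 * #|H|)%N.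
  rewrite /num_faces face_perm_gluing; apply/eqP.
  by rewrite -(eqn_pmul2r (ltn0Sn m)) nF card_darts.
split; first exact: edge_permK.
split; first by case=> [[[|] h] i]; rewrite edge_permE.
split; first exact: gluing_connected.
split; first exact: order_vertex_perm.
split; first by move=> d; rewrite face_perm_gluing order_side_perm.
split; first exact: faces.
rewrite faces /num_vertices /num_edges; rewrite card_darts in nV nE.
move: nV nE euler; set V := fcard _ _; set E := fcard _ _; set X := #|H|.
nia.
Qed.

Variable c : bool -> H -> int.
Hypothesis c_edge : forall i h, `|c false h - c true (M i h)| = 1.
Hypothesis c_vertex : forall i h,
  c false h + c false (N i h) = c true (M i h) + c true (M i (N i h)).

Definition tile_height (x : dart) : int := c x.1.1 x.1.2.

Lemma tile_height_face x : tile_height (face_perm vertex_perm edge_perm x) = tile_height x.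
Proof. by rewrite face_perm_gluing side_permE; case: x => [[]]. Qed.

Lemma tile_height_edge x : `|tile_height x - tile_height (edge_perm x)| = 1.
Proof.
rewrite edge_permE; case: x => [[[|] g] j]; last exact: c_edge.
by rewrite /tile_height /= distrC -[g in c true g](permKV (M (- j))) c_edge.
Qed.

Lemma tile_height_vertex x :
  tile_height x + tile_height (vertex_perm (vertex_perm x)) =
  tile_height (vertex_perm x) + tile_height (vertex_perm (vertex_perm (vertex_perm x))).
Proof.
have black h i : tile_height (false, h, i) + tile_height (vertex_perm (vertex_perm (false, h, i))) =
    tile_height (vertex_perm (false, h, i)) +
    tile_height (vertex_perm (vertex_perm (vertex_perm (false, h, i)))).
  by rewrite !vertex_perm2 !vertex_permE; apply: c_vertex.
have [h [i [->|->]]] := dart_cases x; first exact: black.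
by have := black h i; rewrite !vertex_perm2 NK => <-; apply: addrC.
Qed.

Theorem gluing_null_geodesic_tiling g : (3 <= m)%N -> (1 <= g)%N ->
  (2 * #|H| * (m.+1 - 4) = 8 * (g - 1))%N ->
  null_geodesic_tiling m.+1 g (2 * #|H|).
Proof.
move=> m_ge3 g_ge1 euler.
exists _, vertex_perm, edge_perm, (height_orientation edge_perm tile_height); split.
- exact: gluing_rr_tiling.
- exact: height_geodesic_orientation edge_permK tile_height_face tile_height_edge
    tile_height_vertex.
- exact: height_null_homologous tile_height_face tile_height_edge.
Qed.

End PolygonGluing.

Section Dihedral.
Local Open Scope ring_scope.
Variable n : nat.
Local Notation J := ('I_n.+1 * bool)%type.

Definition dih_flip (x : J) : J := (- x.1, ~~ x.2).
Definition dih_flip1 (x : J) : J := (- x.1 + Zp1, ~~ x.2).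
Definition dih_succ (x : J) : J := (x.1 + Zp1, x.2).
Definition dih_pred (x : J) : J := (x.1 - Zp1, x.2).

Lemma dih_flipK : involutive dih_flip.
Proof. by case=> j e; rewrite /dih_flip /= opprK negbK. Qed.
Lemma dih_flip1K : involutive dih_flip1.
Proof. by case=> j e; rewrite /dih_flip1 /= opprD opprK subrK negbK. Qed.
Lemma dih_predK : cancel dih_pred dih_succ.
Proof. by case=> j e; rewrite /dih_pred /dih_succ /= subrK. Qed.
Lemma dih_flip_flip1 x : dih_flip (dih_flip1 x) = dih_pred x.
Proof. by case: x => j e; rewrite /dih_flip /dih_flip1 /dih_pred /= opprD opprK negbK. Qed.
Lemma dih_pred_flip1 x : dih_pred (dih_flip1 x) = dih_flip x.
Proof. by case: x => j e; rewrite /dih_flip /dih_flip1 /dih_pred /= addrK. Qed.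
Lemma dih_flip1_flip x : dih_flip1 (dih_flip x) = dih_succ x.
Proof. by case: x => j e; rewrite /dih_flip /dih_flip1 /dih_succ /= opprK negbK. Qed.

Definition flip_perm : {perm J} := perm (can_inj dih_flipK).
Definition pred_perm : {perm J} := perm (can_inj dih_predK).

Lemma dihedral_connect (T : finType) (e : rel T) (emb : J -> T) :
  (forall x, connect e (emb x) (emb (dih_flip x))) ->
  (forall x, connect e (emb x) (emb (dih_flip1 x))) ->
  forall x, connect e (emb (0, false)) (emb x).
Proof.
move=> flip flip1.
have succ x : connect e (emb x) (emb (dih_succ x)).
  by rewrite -dih_flip1_flip; apply: connect_trans (flip x) (flip1 _).
have rotation j : connect e (emb (0, false)) (emb (j, false)).
  rewrite -(Zp1_mulrn_val j); elim: (nat_of_ord j) => [|k IH]; first exact: connect0.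
  by rewrite mulrSr; apply: connect_trans IH (succ _).
case=> j [|]; last exact: rotation.
by rewrite -[j]opprK; apply: connect_trans (rotation (- j)) (flip _).
Qed.

End Dihedral.

Ltac case_ifs := repeat match goal with
  | |- context [if ?b then _ else _] =>
    lazymatch b with
    | context [if _ then _ else _] => fail
    | _ => let E := fresh "E" in case E : b
    end
  end.

Section BaseGluing.
Local Open Scope ring_scope.
Variables (n m : nat).
Local Notation J := ('I_n.+1 * bool)%type.
Local Notation I := 'I_m.+1.

Definition base_perm (i : I) : {perm J} :=
  if odd i then flip_perm n else if i == 2%N :> nat then pred_perm n else 1%g.

Definition base_N (i : I) : J -> J :=
  if (i == 2%N :> nat) || (i == 3%N :> nat) then @dih_flip1 n else @dih_flip n.

Lemma base_permE i x :
  base_perm i x = if odd i then dih_flip x else if i == 2%N :> nat then dih_pred x else x.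
Proof. by rewrite /base_perm; case: ifP => _; [|case: ifP => _]; rewrite ?permE ?perm1. Qed.

Lemma base_NK i : involutive (base_N i).
Proof. by rewrite /base_N; case: ifP => _; [apply: dih_flip1K | apply: dih_flipK]. Qed.

Lemma base_N_bit i x : (base_N i x).2 = ~~ x.2.
Proof. by rewrite /base_N; case: ifP. Qed.

Lemma base_MN (i : I) (x : J) : (3 <= m)%N -> i != 0%N :> nat ->
  base_perm (i - Zp1) (base_N i x) = base_perm i x.
Proof.
move=> m_ge3 i_neq0; move: (ltn_ord i) => lt_i.
rewrite !base_permE /base_N val_subZp1 ?(negbTE i_neq0); last lia.
case_ifs; rewrite ?dih_flipK ?dih_flip_flip1 ?dih_pred_flip1 //; lia.
Qed.

End BaseGluing.

Section EvenPolygons.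
Local Open Scope ring_scope.
Variables (n m : nat).
Hypothesis m_ge3 : (3 <= m)%N.
Hypothesis m_odd : odd m.
Local Notation J := ('I_n.+1 * bool)%type.
Local Notation I := 'I_m.+1.
Local Notation M := (@base_perm n m).
Local Notation N := (@base_N n m).

Lemma even_MN (i : I) (x : J) : M (i - Zp1) (N i x) = M i x.
Proof.
have [i0|] := eqVneq (i : nat) 0%N; last exact: base_MN.
by rewrite !base_permE /base_N val_subZp1 ?i0 ?m_odd ?dih_flipK //; lia.
Qed.

Lemma even_N_fixfree (i : I) (x : J) : N i x != x.
Proof. by apply/eqP => /(congr1 snd); rewrite base_N_bit; case: x.2. Qed.

Lemma even_N_connected (x y : J) : connect (N_step N) x y.
Proof.
apply: (connect_from_base (N_step_sym (@base_NK n m))) => {x}y.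
have step i z : connect (N_step N) z (N i z).
  by apply: connect1; apply/existsP; exists i.
apply: (dihedral_connect (emb := id)) => z.
  by have := step ord0 z; rewrite /base_N.
have := step (inord 2) z; rewrite /base_N inordK //; lia.
Qed.

Definition base_height (b : bool) (x : J) : int := if b then 1 else if x.2 then 2 else 0.

Theorem even_null_geodesic_tiling g : (1 <= g)%N ->
  (4 * n.+1 * (m.+1 - 4) = 8 * (g - 1))%N ->
  null_geodesic_tiling m.+1 g (4 * n.+1).
Proof.
move=> g_ge1 euler.
have card_J : (2 * #|{: J}| = 4 * n.+1)%N by rewrite card_prod card_ord card_bool; lia.
rewrite -card_J.
apply: (gluing_null_geodesic_tiling even_MN (@base_NK n m) even_N_fixfree
  even_N_connected (c := base_height)) => //; last by rewrite card_J.
- by move=> i x; rewrite /base_height; case: x.2.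
- by move=> i x; rewrite /base_height base_N_bit; case: x.2.
Qed.

End EvenPolygons.

Section OddPolygons.
Local Open Scope ring_scope.
Variables (n m : nat).
Hypothesis m_ge4 : (4 <= m)%N.
Hypothesis m_even : ~~ odd m.
Local Notation K := ('I_n.+1 * bool * bool)%type.
Local Notation I := 'I_m.+1.
Local Notation M := (@base_perm n m).
Local Notation N := (@base_N n m).

(* For m even, base_MN fails at i = 0 since base_perm m is the identity.
   Letting side m also switch the extra bit repairs this, at the cost of
   changing N at both ends of side m. *)
Definition twisted_glue (i : I) (y : K) : K :=
  if i == m :> nat then (dih_flip y.1, ~~ y.2) else (M i y.1, y.2).

Lemma twisted_glue_inj i : injective (twisted_glue i).
Proof.
move=> [x e] [y f] /eqP; rewrite /twisted_glue; case: ifP => _; rewrite xpair_eqE /=.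
  by rewrite (inj_eq (can_inj (@dih_flipK n))) (inj_eq negb_inj) => /andP[/eqP-> /eqP->].
by rewrite (inj_eq perm_inj) => /andP[/eqP-> /eqP->].
Qed.

Definition twisted_perm (i : I) : {perm K} := perm (@twisted_glue_inj i).

Definition twisted_N (i : I) (y : K) : K :=
  if i == m :> nat then (y.1, ~~ y.2)
  else if i == 0%N :> nat then (dih_flip y.1, ~~ y.2)
  else (N i y.1, y.2).

Lemma twisted_MN (i : I) (y : K) : twisted_perm (i - Zp1) (twisted_N i y) = twisted_perm i y.
Proof.
have m_gt0 : (0 < m)%N by lia.
move: (ltn_ord i) => lt_i; case: y => [x f].
rewrite !permE /twisted_glue /twisted_N /base_N !base_permE !(val_subZp1 _ m_gt0) /=.
case_ifs; rewrite ?dih_flipK ?dih_flip_flip1 ?dih_pred_flip1 ?negbK //; lia.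
Qed.

Lemma twisted_NK i : involutive (twisted_N i).
Proof.
by move=> [x e]; rewrite /twisted_N; case_ifs; rewrite /= ?dih_flipK ?base_NK ?negbK.
Qed.

Lemma twisted_N_fixfree i y : twisted_N i y != y.
Proof.
case: y => [[j e] f]; rewrite /twisted_N /base_N; case_ifs;
  by rewrite /dih_flip /dih_flip1 !xpair_eqE /=; case: e f => [] []; rewrite ?andbF.
Qed.

Lemma twisted_N_connected (y z : K) : connect (N_step twisted_N) y z.
Proof.
apply: (connect_from_base (N_step_sym twisted_NK)) => {y}z.
have step i y : connect (N_step twisted_N) y (twisted_N i y).
  by apply: connect1; apply/existsP; exists i.
have black x : connect (N_step twisted_N) (0, false, false) (x, false).
  apply: (dihedral_connect (emb := fun x => (x, false))) => {}x.
    by have := step (inord 1) (x, false); rewrite /twisted_N /base_N inordK //=; case_ifs; lia.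
  by have := step (inord 2) (x, false); rewrite /twisted_N /base_N inordK //=; case_ifs; lia.
case: z => x [|]; last exact: black.
by apply: connect_trans (black x) _; have := step ord_max (x, false); rewrite /twisted_N /= eqxx.
Qed.

Definition twisted_height (b : bool) (y : K) : int :=
  if b then (if ~~ y.1.2 && y.2 then 3 else 1)
  else (if ~~ y.1.2 && ~~ y.2 then 0 else 2).

Lemma twisted_height_edge i y : `|twisted_height false y - twisted_height true (twisted_perm i y)| = 1.
Proof.
case: y => [[j e] f]; rewrite permE /twisted_glue base_permE.
by case_ifs; case: e f => [] [].
Qed.

Lemma twisted_height_vertex i y :
  twisted_height false y + twisted_height false (twisted_N i y) =
  twisted_height true (twisted_perm i y) + twisted_height true (twisted_perm i (twisted_N i y)).
Proof.
move: (ltn_ord i) => lt_i; case: y => [[j e] f].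
rewrite !permE /twisted_glue /twisted_N /base_N !base_permE.
by case_ifs; case: e f => [] [] //; lia.
Qed.

Theorem odd_null_geodesic_tiling g : (1 <= g)%N ->
  (8 * n.+1 * (m.+1 - 4) = 8 * (g - 1))%N ->
  null_geodesic_tiling m.+1 g (8 * n.+1).
Proof.
move=> g_ge1 euler.
have card_K : (2 * #|{: K}| = 8 * n.+1)%N by rewrite !card_prod card_ord card_bool; lia.
rewrite -card_K.
apply: (gluing_null_geodesic_tiling twisted_MN twisted_NK twisted_N_fixfree twisted_N_connected
  twisted_height_edge twisted_height_vertex) => //; [lia | by rewrite card_K].
Qed.

End OddPolygons.

Theorem proposition6p1 (p g : nat) :
  5 <= p -> 2 <= g ->
  (p - 4) %| 8 * (g - 1) -> 4 %| (8 * (g - 1)) %/ (p - 4) ->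
  exists (D : finType) (s a : {perm D}) (O : {set D}),
    [/\ rr_tiling s a p g ((8 * (g - 1)) %/ (p - 4)),
        geodesic_orientation s a O
      & null_homologous s a (geodesic_chain O)].
Proof.
move=> p_ge5 g_ge2 dvd_F /dvdnP [k F_eq].
suff : null_geodesic_tiling p g ((8 * (g - 1)) %/ (p - 4)) by [].
have := divnK dvd_F; rewrite F_eq (mulnC k 4).
have [m ->] : exists m, p = m.+1 by exists p.-1; lia.
move=> euler; have [l k_eq] : exists l, k = l.+1 by exists k.-1; nia.
rewrite k_eq in euler *.
have [m_odd | m_even] := boolP (odd m).
  by apply: even_null_geodesic_tiling => //; lia.
have [n l_eq] : exists n, l.+1 = 2 * n.+1.
  have half_euler : l.+1 * (m - 3) = 2 * (g - 1) by nia.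
  have : ~~ odd (l.+1 * (m - 3)) by rewrite half_euler oddM.
  by rewrite oddM oddB ?(negbTE m_even) /=; [exists (l./2); lia | lia].
rewrite l_eq mulnA in euler *.
by apply: odd_null_geodesic_tiling => //; lia.
Qed.
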